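(* Let $v_0>0$, let $S$ be a finite nonempty index set, let $x_i\in\mathbb R^d$ with $\|x_i\|_2\le1$ for $i\in S$, and let $(y_i)_{i\in S\cup\{0\}}\in\{0,1\}^{S\cup\{0\}}$ with $\sum_i y_i=1$. Define $$\ell(\mathbf w)=-\sum_{i\in S\cup\{0\}}y_i\log p(i\mid\mathbf w),\quad p(i\mid\mathbf w)=\frac{e^{x_i^\top\mathbf w}}{v_0+\sum_{j\in S}e^{x_j^\top\mathbf w}}\ (i\in S),\quad p(0\mid\mathbf w)=\frac{v_0}{v_0+\sum_{j\in S}e^{x_j^\top\mathbf w}}.$$ Then $\ell$ is $3\sqrt2$-self-concordant-like: for all $\mathbf a,\mathbf b\in\mathbb R^d$, the function $\phi(s)=\ell(\mathbf a+s\mathbf b)$ satisfies $|\phi'''(s)|\le 3\sqrt2\,\|\mathbf b\|_2\,\phi''(s)$ for all $s\in\mathbb R$. In particular the constant does not depend on $|S|$. *)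

From Stdlib Require Import Reals Lra.
From Coquelicot Require Import Coquelicot.
Open Scope R_scope.

Fixpoint rsum (n : nat) (f : nat -> R) : R :=
  match n with
  | O => 0
  | S m => rsum m f + f m
  end.

(* Vectors of R^d are represented as functions nat -> R, coordinates 0..d-1. *)
Definition dot (d : nat) (u v : nat -> R) : R := rsum d (fun k => u k * v k).
Definition norm2 (d : nat) (u : nat -> R) : R := sqrt (dot d u u).

(* S = {1,...,n}, outside option = 0. x i is the feature vector of item i. *)
Definition mnl_denom (d n : nat) (v0 : R) (x : nat -> nat -> R) (w : nat -> R) : R :=
  v0 + rsum n (fun j => exp (dot d (x (S j)) w)).

Definition mnl_prob (d n : nat) (v0 : R) (x : nat -> nat -> R) (w : nat -> R)
  (i : nat) : R :=
  match i with
  | O => v0 / mnl_denom d n v0 x w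
  | S _ => exp (dot d (x i) w) / mnl_denom d n v0 x w
  end.

Definition mnl_loss (d n : nat) (v0 : R) (x : nat -> nat -> R) (y : nat -> R)
  (w : nat -> R) : R :=
  - rsum (S n) (fun i => y i * ln (mnl_prob d n v0 x w i)).

(* Along a line a + s b the loss is an affine function of s plus the log-partition function
   s |-> ln (v0 + sum_k exp (c_k + u_k s)) with u_k = x_k . b; the coefficient of the logarithm
   is 1 because the y_i sum to 1.  The second and third derivatives of a log-partition function
   are the variance and the third central moment of the distribution with masses proportional
   to v0 at 0 and to exp (c_k + u_k s) at u_k.  All atoms lie in [-|b|, |b|], so every deviation
   from the mean is at most 2 |b|, whence |third central moment| <= 2 |b| variance; and
   2 <= 3 sqrt 2. *)
From Stdlib Require Import Reals Lra Psatz.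
From Coquelicot Require Import Coquelicot.
Open Scope R_scope.

Lemma rsum_ext n f g : (forall k, (k < n)%nat -> f k = g k) -> rsum n f = rsum n g.
Proof.
  induction n as [|n IH]; simpl; intros H; auto.
  rewrite IH by (intros; apply H; lia). rewrite H by lia. reflexivity.
Qed.

Lemma rsum_add n f g : rsum n (fun k => f k + g k) = rsum n f + rsum n g.
Proof. induction n as [|n IH]; simpl; [ring | rewrite IH; ring]. Qed.

Lemma rsum_scal n c f : rsum n (fun k => c * f k) = c * rsum n f.
Proof. induction n as [|n IH]; simpl; [ring | rewrite IH; ring]. Qed.

Lemma rsum_le n f g : (forall k, (k < n)%nat -> f k <= g k) -> rsum n f <= rsum n g.
Proof.
  induction n as [|n IH]; simpl; intros H; [lra|].
  assert (rsum n f <= rsum n g) by (apply IH; intros; apply H; lia).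
  assert (f n <= g n) by (apply H; lia). lra.
Qed.

Lemma rsum_ge0 n f : (forall k, (k < n)%nat -> 0 <= f k) -> 0 <= rsum n f.
Proof.
  induction n as [|n IH]; simpl; intros H; [lra|].
  assert (0 <= rsum n f) by (apply IH; intros; apply H; lia).
  assert (0 <= f n) by (apply H; lia). lra.
Qed.

Lemma Rabs_rsum_le n f : Rabs (rsum n f) <= rsum n (fun k => Rabs (f k)).
Proof.
  induction n as [|n IH]; simpl; [rewrite Rabs_R0; lra|].
  eapply Rle_trans; [apply Rabs_triang | lra].
Qed.

Lemma rsum_Sl n f : rsum (S n) f = f 0%nat + rsum n (fun k => f (S k)).
Proof. induction n as [|n IH]; simpl in *; [ring | rewrite IH; ring]. Qed.

Lemma is_derive_rsum n (F F' : nat -> R -> R) t :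
  (forall k, is_derive (F k) t (F' k t)) ->
  is_derive (fun s => rsum n (fun k => F k s)) t (rsum n (fun k => F' k t)).
Proof.
  intros H; induction n as [|n IH]; simpl.
  - exact (is_derive_const 0 t).
  - apply (is_derive_plus (fun s => rsum n (fun k => F k s)) (F n)); auto.
Qed.

Lemma dot_ge0 d u : 0 <= dot d u u.
Proof. apply rsum_ge0; intros; nra. Qed.

Lemma dot_add_scal d v a b t : dot d v (fun k => a k + t * b k) = dot d v a + t * dot d v b.
Proof. unfold dot; induction d as [|d IH]; simpl; [ring | rewrite IH; ring]. Qed.

Lemma cauchy_schwarz_step A P Q a b :
  0 <= P -> 0 <= Q -> A ^ 2 <= P * Q -> (A + a * b) ^ 2 <= (P + a * a) * (Q + b * b).
Proof.
  intros HP HQ HA.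
  (* 2 A a b <= P b^2 + Q a^2 follows from (2 A a b)^2 <= 4 P Q a^2 b^2 <= (P b^2 + Q a^2)^2. *)
  assert (H : 2 * A * a * b <= P * b * b + Q * a * a).
  { assert (0 <= (a * b) ^ 2 * (P * Q - A ^ 2)) by (apply Rmult_le_pos; [apply pow2_ge_0 | lra]).
    assert (0 <= (P * b * b - Q * a * a) ^ 2) by apply pow2_ge_0.
    assert (0 <= P * b * b + Q * a * a) by nra.
    assert ((2 * A * a * b) ^ 2 <= (P * b * b + Q * a * a) ^ 2) by nra.
    destruct (Rle_dec (2 * A * a * b) 0); [lra | nra]. }
  nra.
Qed.

Lemma cauchy_schwarz d u v : dot d u v ^ 2 <= dot d u u * dot d v v.
Proof.
  induction d as [|d IH]; [unfold dot; simpl; lra|].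
  apply cauchy_schwarz_step; [apply dot_ge0 | apply dot_ge0 | exact IH].
Qed.

Lemma Rabs_dot_le d u v : Rabs (dot d u v) <= norm2 d u * norm2 d v.
Proof.
  unfold norm2. rewrite <- sqrt_mult by apply dot_ge0.
  rewrite <- sqrt_Rsqr_abs. apply sqrt_le_1_alt.
  replace (Rsqr (dot d u v)) with (dot d u v ^ 2) by (unfold Rsqr; ring).
  apply cauchy_schwarz.
Qed.

Definition wmoment (n : nat) (w u : nat -> R) (m : nat) : R :=
  rsum n (fun k => w k * u k ^ m).

Definition cumulant2 (D M1 M2 : R) : R := M2 / D - (M1 / D) ^ 2.

Definition cumulant3 (D M1 M2 M3 : R) : R :=
  M3 / D - 3 * (M1 / D) * (M2 / D) + 2 * (M1 / D) ^ 3.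

Lemma wmoment_centered2 n w u m :
  rsum n (fun k => w k * (u k - m) ^ 2)
  = wmoment n w u 2 - 2 * m * wmoment n w u 1 + m ^ 2 * wmoment n w u 0.
Proof. unfold wmoment; induction n as [|n IH]; simpl in *; [ring | rewrite IH; ring]. Qed.

Lemma wmoment_centered3 n w u m :
  rsum n (fun k => w k * (u k - m) ^ 3)
  = wmoment n w u 3 - 3 * m * wmoment n w u 2 + 3 * m ^ 2 * wmoment n w u 1
    - m ^ 3 * wmoment n w u 0.
Proof. unfold wmoment; induction n as [|n IH]; simpl in *; [ring | rewrite IH; ring]. Qed.

Lemma Rabs_mul_cube_le w z r : 0 <= w -> Rabs z <= r -> Rabs (w * z ^ 3) <= r * (w * z ^ 2).
Proof.
  intros Hw Hz.
  replace (w * z ^ 3) with (z * (w * z ^ 2)) by ring.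
  rewrite Rabs_mult, (Rabs_pos_eq (w * z ^ 2)) by (apply Rmult_le_pos; [lra | apply pow2_ge_0]).
  apply Rmult_le_compat_r; [apply Rmult_le_pos; [lra | apply pow2_ge_0] | exact Hz].
Qed.

Section Cumulants.

Variables (n : nat) (v0 B : R) (w u : nat -> R).
Hypothesis v0_gt0 : 0 < v0.
Hypothesis B_ge0 : 0 <= B.
Hypothesis w_ge0 : forall k, (k < n)%nat -> 0 <= w k.
Hypothesis u_bound : forall k, (k < n)%nat -> Rabs (u k) <= B.

Local Notation M := (wmoment n w u).
Local Notation D := (v0 + wmoment n w u 0).
Local Notation mu := (wmoment n w u 1 / (v0 + wmoment n w u 0)).

Lemma wmoment0_ge0 : 0 <= M 0.
Proof. apply rsum_ge0; intros k Hk; simpl; rewrite Rmult_1_r; auto. Qed.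

Lemma mass_gt0 : 0 < D.
Proof. pose proof wmoment0_ge0; lra. Qed.

Lemma Rabs_mean_le : Rabs mu <= B.
Proof.
  pose proof mass_gt0 as HD.
  assert (H1 : Rabs (M 1) <= B * M 0).
  { unfold wmoment. eapply Rle_trans; [apply Rabs_rsum_le|].
    rewrite <- rsum_scal. apply rsum_le; intros k Hk.
    rewrite pow_1, pow_O, Rmult_1_r, Rabs_mult, (Rabs_pos_eq (w k)) by auto.
    specialize (w_ge0 k Hk). specialize (u_bound k Hk). nra. }
  unfold Rdiv. rewrite Rabs_mult, (Rabs_pos_eq (/ D)) by (apply Rlt_le, Rinv_0_lt_compat; lra).
  apply Rmult_le_reg_r with D; [lra|].
  rewrite Rmult_assoc, Rinv_l by lra.
  pose proof wmoment0_ge0. nra.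
Qed.

Lemma cumulant2_centered :
  cumulant2 D (M 1) (M 2) = (v0 * (- mu) ^ 2 + rsum n (fun k => w k * (u k - mu) ^ 2)) / D.
Proof.
  pose proof mass_gt0. rewrite wmoment_centered2. unfold cumulant2. field. lra.
Qed.

Lemma cumulant3_centered :
  cumulant3 D (M 1) (M 2) (M 3) = (v0 * (- mu) ^ 3 + rsum n (fun k => w k * (u k - mu) ^ 3)) / D.
Proof.
  pose proof mass_gt0. rewrite wmoment_centered3. unfold cumulant3. field. lra.
Qed.

Lemma cumulant2_ge0 : 0 <= cumulant2 D (M 1) (M 2).
Proof.
  pose proof mass_gt0. rewrite cumulant2_centered.
  apply Rdiv_le_0_compat; [|lra].
  apply Rplus_le_le_0_compat.
  - apply Rmult_le_pos; [lra | apply pow2_ge_0].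
  - apply rsum_ge0; intros k Hk. apply Rmult_le_pos; [auto | apply pow2_ge_0].
Qed.

Lemma Rabs_cumulant3_le : Rabs (cumulant3 D (M 1) (M 2) (M 3)) <= 2 * B * cumulant2 D (M 1) (M 2).
Proof.
  pose proof mass_gt0. pose proof Rabs_mean_le as Hmu.
  rewrite cumulant3_centered, cumulant2_centered.
  unfold Rdiv. rewrite Rabs_mult, (Rabs_pos_eq (/ D)) by (apply Rlt_le, Rinv_0_lt_compat; lra).
  rewrite <- Rmult_assoc. apply Rmult_le_compat_r; [apply Rlt_le, Rinv_0_lt_compat; lra|].
  rewrite Rmult_plus_distr_l.
  eapply Rle_trans; [apply Rabs_triang | apply Rplus_le_compat].
  - apply Rabs_mul_cube_le; [lra|]. rewrite Rabs_Ropp. lra.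
  - eapply Rle_trans; [apply Rabs_rsum_le|]. rewrite <- rsum_scal.
    apply rsum_le; intros k Hk. apply Rabs_mul_cube_le; [auto|].
    specialize (u_bound k Hk). apply Rabs_le.
    apply Rabs_le_between in u_bound. apply Rabs_le_between in Hmu. lra.
Qed.

End Cumulants.

Definition expmoment (n : nat) (c u : nat -> R) (m : nat) (t : R) : R :=
  wmoment n (fun k => exp (c k + u k * t)) u m.

Lemma is_derive_expmoment n c u m t : is_derive (expmoment n c u m) t (expmoment n c u (S m) t).
Proof.
  unfold expmoment, wmoment.
  apply (is_derive_rsum n (fun k s => exp (c k + u k * s) * u k ^ m)
                        (fun k s => exp (c k + u k * s) * u k ^ S m)).
  intros k. auto_derive; auto. simpl. ring.
Qed.

Lemma Derive_expmoment n c u m t : Derive (fun s => expmoment n c u m s) t = expmoment n c u (S m) t.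
Proof. apply is_derive_unique, is_derive_expmoment. Qed.

Lemma ex_derive_expmoment n c u m t : ex_derive (fun s => expmoment n c u m s) t.
Proof. eexists; apply is_derive_expmoment. Qed.

Section LogPartition.

Variables (n : nat) (c u : nat -> R) (v0 K L : R).
Hypothesis v0_gt0 : 0 < v0.

Local Notation M m t := (expmoment n c u m t).
Local Notation h := (fun t => - (K + t * L) + ln (v0 + expmoment n c u 0 t)).

Lemma expmass_gt0 t : 0 < v0 + M 0 t.
Proof.
  apply (mass_gt0 n v0 (fun k => exp (c k + u k * t)) u v0_gt0).
  intros; apply Rlt_le, exp_pos.
Qed.

Lemma Derive_n_log_partition1 t : Derive_n h 1 t = - L + M 1 t / (v0 + M 0 t).
Proof.
  pose proof (expmass_gt0 t). apply is_derive_unique.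
  auto_derive; [repeat split; auto using ex_derive_expmoment |].
  rewrite Derive_expmoment. field. lra.
Qed.

Lemma Derive_n_log_partition2 t :
  Derive_n h 2 t = cumulant2 (v0 + M 0 t) (M 1 t) (M 2 t).
Proof.
  change (Derive (Derive_n h 1) t = cumulant2 (v0 + M 0 t) (M 1 t) (M 2 t)).
  rewrite (Derive_ext _ _ t Derive_n_log_partition1).
  pose proof (expmass_gt0 t). apply is_derive_unique. unfold cumulant2.
  auto_derive; [repeat split; auto using ex_derive_expmoment; lra |].
  rewrite !Derive_expmoment. field. lra.
Qed.

Lemma Derive_n_log_partition3 t :
  Derive_n h 3 t = cumulant3 (v0 + M 0 t) (M 1 t) (M 2 t) (M 3 t).
Proof.
  change (Derive (Derive_n h 2) t = cumulant3 (v0 + M 0 t) (M 1 t) (M 2 t) (M 3 t)).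
  rewrite (Derive_ext _ _ t Derive_n_log_partition2).
  pose proof (expmass_gt0 t). apply is_derive_unique. unfold cumulant2, cumulant3.
  auto_derive; [repeat split; auto using ex_derive_expmoment; lra |].
  rewrite !Derive_expmoment. field. lra.
Qed.

End LogPartition.

Lemma mnl_loss_line d n v0 x y a b t :
  0 < v0 -> rsum (S n) y = 1 ->
  mnl_loss d n v0 x y (fun k => a k + t * b k)
  = - ((y 0%nat * ln v0 + rsum n (fun k => y (S k) * dot d (x (S k)) a))
       + t * rsum n (fun k => y (S k) * dot d (x (S k)) b))
    + ln (v0 + expmoment n (fun k => dot d (x (S k)) a) (fun k => dot d (x (S k)) b) 0 t).
Proof.
  intros Hv Hy.
  set (D := v0 + expmoment n (fun k => dot d (x (S k)) a) (fun k => dot d (x (S k)) b) 0 t).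
  assert (HD : mnl_denom d n v0 x (fun k => a k + t * b k) = D).
  { unfold mnl_denom, D, expmoment, wmoment. apply Rplus_eq_compat_l, rsum_ext; intros k _.
    rewrite dot_add_scal, Rmult_1_r, (Rmult_comm t). reflexivity. }
  assert (HDpos : 0 < D).
  { apply (expmass_gt0 n _ _ v0 Hv). }
  unfold mnl_loss. rewrite rsum_Sl in *. simpl mnl_prob. rewrite HD.
  rewrite (rsum_ext n _ (fun k => (y (S k) * dot d (x (S k)) a
                                    + t * (y (S k) * dot d (x (S k)) b))
                                  + (- ln D) * y (S k))).
  2:{ intros k _. unfold Rdiv. rewrite ln_mult, ln_Rinv, ln_exp, dot_add_scal by
        (auto using exp_pos, Rinv_0_lt_compat). ring. }
  rewrite rsum_add, rsum_add, rsum_scal, rsum_scal.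
  unfold Rdiv. rewrite ln_mult, ln_Rinv by auto using Rinv_0_lt_compat.
  replace (rsum n (fun k => y (S k))) with (1 - y 0%nat) by lra. ring.
Qed.

Theorem propositionD1 (d n : nat) (v0 : R) (x : nat -> nat -> R) (y : nat -> R) :
  0 < v0 ->
  (1 <= n)%nat ->
  (forall i, (1 <= i <= n)%nat -> norm2 d (x i) <= 1) ->
  (forall i, (i <= n)%nat -> y i = 0 \/ y i = 1) ->
  rsum (S n) y = 1 ->
  forall (a b : nat -> R) (s : R),
    Rabs (Derive_n (fun t => mnl_loss d n v0 x y (fun k => a k + t * b k)) 3 s)
    <= 3 * sqrt 2 * norm2 d b
       * Derive_n (fun t => mnl_loss d n v0 x y (fun k => a k + t * b k)) 2 s.
Proof.
  intros Hv _ Hx _ Hy a b s.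
  rewrite !(Derive_n_ext _ _ _ s (fun t => mnl_loss_line d n v0 x y a b t Hv Hy)).
  rewrite Derive_n_log_partition3, Derive_n_log_partition2 by exact Hv.
  unfold expmoment.
  assert (Hb : 0 <= norm2 d b) by apply sqrt_pos.
  assert (Hu : forall k, (k < n)%nat -> Rabs (dot d (x (S k)) b) <= norm2 d b).
  { intros k Hk. pose proof (Hx (S k) ltac:(lia)). pose proof (Rabs_dot_le d (x (S k)) b). nra. }
  assert (Hw : forall k, (k < n)%nat -> 0 <= exp (dot d (x (S k)) a + dot d (x (S k)) b * s)).
  { intros; apply Rlt_le, exp_pos. }
  assert (Hsqrt2 : 1 <= sqrt 2) by (rewrite <- sqrt_1; apply sqrt_le_1_alt; lra).
  eapply Rle_trans; [apply (Rabs_cumulant3_le n v0 (norm2 d b)); auto|].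
  apply Rmult_le_compat_r; [apply cumulant2_ge0; auto | nra].
Qed.
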